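(* Let $\mathbb{F}$ be a field, $p,q\in\mathbb{F}[t]$ monic of degree $2$, and $\mathcal{W}_{p,q}=\mathbb{F}\langle a,b\rangle/(p(a),q(b))$. A nonzero element $x\in\mathcal{W}_{p,q}$ is a zero divisor (i.e. there is $y\neq0$ with $xy=0$ or $yx=0$) if and only if $N(x)=0$, where $N(x)=xx^\star$.
   Context: $\mathcal{W}_{p,q}$ is the free associative unital $\mathbb{F}$-algebra on two generators modulo the ideal generated by $p(a),q(b)$. For a $2$-dimensional algebra set $x^\star=\mathrm{tr}(x)-x$; the adjunction $x\mapsto x^\star$ of $\mathcal{W}_{p,q}$ is the unique $\mathbb{F}$-linear anti-automorphism agreeing with this on $\mathbb{F}[a]$ and $\mathbb{F}[b]$ (so $a^\star=\mathrm{tr}(p)-a$, $b^\star=\mathrm{tr}(q)-b$, where $\mathrm{tr}(p)$ is minus the coefficient of $t$). The norm $N(x)=xx^\star=x^\star x$ lies in the center of $\mathcal{W}_{p,q}$. *)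

From HB Require Import structures.
From mathcomp Require Import all_boot all_order all_algebra.
Set Implicit Arguments. Unset Strict Implicit. Unset Printing Implicit Defensive.
Import GRing.Theory.
Local Open Scope ring_scope.

Definition trp (F : fieldType) (p : {poly F}) : F := - p`_1.

(* (W, a, b) is the free associative unital F-algebra on a, b modulo the
   two-sided ideal generated by p(a), q(b): it satisfies p(a) = q(b) = 0 and is
   initial (universal) among F-algebras with two such elements. *)
Definition is_W_pq (F : fieldType) (p q : {poly F}) (W : algType F) (a b : W) : Prop :=
  horner_alg a p = 0 /\ horner_alg b q = 0 /\
  forall (B : algType F) (a' b' : B),
    horner_alg a' p = 0 -> horner_alg b' q = 0 ->
    (exists f : {lrmorphism W -> B}, f a = a' /\ f b = b') /\
    (forall f g : {lrmorphism W -> B}, f a = g a -> f b = g b -> f =1 g).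

(* star is the F-linear anti-automorphism of W with x^* = tr(x) - x on F[a], F[b];
   by linearity this amounts to 1^* = 1, a^* = tr(p) - a, b^* = tr(q) - b. *)
Definition is_adjunction (F : fieldType) (p q : {poly F}) (W : algType F) (a b : W)
    (star : {linear W -> W}) : Prop :=
  star 1 = 1 /\ (forall x y, star (x * y) = star y * star x) /\ bijective star /\
  star a = (trp p)%:A - a /\ star b = (trp q)%:A - b.

(* Put c := ab + ba - tr(q) a - tr(p) b.  The quadratic relations make c central
   and W spanned over F[c] by 1, a, b, ab.  Sending a to the companion matrix of p
   and b to a suitable root of q in M_2(F[X]) gives an algebra map f that maps c
   to gamma(X) 1 with deg gamma = 2 and maps 1, a, b, ab to matrices independent
   over F[X]; hence f is injective.  The adjugate of a 2x2 matrix M is tr M - M,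
   so f(x⋆) = adj f(x) and f(x x⋆) = det f(x) 1.  If xy = 0 or yx = 0 with y <> 0,
   then det f(x) kills the nonzero matrix f(y), so det f(x) = 0 and x x⋆ = 0;
   conversely y = x⋆ is nonzero since ⋆ is bijective. *)

From HB Require Import structures.
From mathcomp Require Import all_boot all_order all_algebra.
From mathcomp Require Import ring zify boolp.
Set Implicit Arguments. Unset Strict Implicit. Unset Printing Implicit Defensive.
Import GRing.Theory.
Local Open Scope ring_scope.

Lemma ord2P (i : 'I_2) : i = 0 \/ i = 1.
Proof. by case: i => [[|[|//]]] Hi; [left|right]; apply: val_inj. Qed.

Section Matrix22.
Variable R : comNzRingType.
Implicit Types (d k : R) (M N : 'M[R]_2).

Lemma mx22_ext M N :
  M 0 0 = N 0 0 -> M 0 1 = N 0 1 -> M 1 0 = N 1 0 -> M 1 1 = N 1 1 -> M = N.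
Proof.
move=> e00 e01 e10 e11; apply/matrixP => i j.
by case: (ord2P i) => ->; case: (ord2P j) => ->.
Qed.

Definition mx22 x y z w : 'M[R]_2 :=
  \matrix_(i, j) if i == 0 then (if j == 0 then x else y) else (if j == 0 then z else w).

Lemma mx22_eta M : M = mx22 (M 0 0) (M 0 1) (M 1 0) (M 1 1).
Proof. by apply: mx22_ext; rewrite !mxE. Qed.

Lemma mx22_inj x y z w x' y' z' w' :
  mx22 x y z w = mx22 x' y' z' w' -> [/\ x = x', y = y', z = z' & w = w'].
Proof.
move=> e; have := congr1 (fun M : 'M_2 => (M 0 0, M 0 1, M 1 0, M 1 1)) e.
by rewrite !mxE /= => [[-> -> -> ->]].
Qed.

Lemma mulmx22 x y z w x' y' z' w' :
  mx22 x y z w *m mx22 x' y' z' w' =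
  mx22 (x * x' + y * z') (x * y' + y * w') (z * x' + w * z') (z * y' + w * w').
Proof. by apply: mx22_ext; rewrite !mxE !big_ord_recl big_ord0 !mxE /= addr0. Qed.

Lemma addmx22 x y z w x' y' z' w' :
  mx22 x y z w + mx22 x' y' z' w' = mx22 (x + x') (y + y') (z + z') (w + w').
Proof. by apply: mx22_ext; rewrite !mxE. Qed.

Lemma oppmx22 x y z w : - mx22 x y z w = mx22 (- x) (- y) (- z) (- w).
Proof. by apply: mx22_ext; rewrite !mxE. Qed.

Lemma scalemx22 k x y z w : k *: mx22 x y z w = mx22 (k * x) (k * y) (k * z) (k * w).
Proof. by apply: mx22_ext; rewrite !mxE. Qed.

Lemma scalar_mx22 d : d%:M = mx22 d 0 0 d.
Proof. by apply: mx22_ext; rewrite !mxE. Qed.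

Lemma mx22_0 : 0 = mx22 0 0 0 0.
Proof. by apply: mx22_ext; rewrite !mxE. Qed.

Definition adj22 M := mx22 (M 1 1) (- M 0 1) (- M 1 0) (M 0 0).
Definition det22 M := M 0 0 * M 1 1 - M 0 1 * M 1 0.

Lemma adj22E x y z w : adj22 (mx22 x y z w) = mx22 w (- y) (- z) x.
Proof. by rewrite /adj22 !mxE. Qed.

Lemma det22E x y z w : det22 (mx22 x y z w) = x * w - y * z.
Proof. by rewrite /det22 !mxE. Qed.

Lemma mul_mx_adj22 M : M *m adj22 M = (det22 M)%:M.
Proof.
by rewrite [M]mx22_eta adj22E det22E mulmx22 scalar_mx22; congr mx22; ring.
Qed.

Lemma mul_adj22_mx M : adj22 M *m M = (det22 M)%:M.
Proof.
by rewrite [M]mx22_eta adj22E det22E mulmx22 scalar_mx22; congr mx22; ring.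
Qed.

Lemma adj22D M N : adj22 (M + N) = adj22 M + adj22 N.
Proof.
by rewrite [M]mx22_eta [N]mx22_eta addmx22 !adj22E addmx22; congr mx22; ring.
Qed.

Lemma adj22Z k M : adj22 (k *: M) = k *: adj22 M.
Proof. by rewrite [M]mx22_eta scalemx22 !adj22E scalemx22; congr mx22; ring. Qed.

Lemma adj22M M N : adj22 (M *m N) = adj22 N *m adj22 M.
Proof.
by rewrite [M]mx22_eta [N]mx22_eta mulmx22 !adj22E mulmx22; congr mx22; ring.
Qed.

Lemma adj22_scalar d : adj22 d%:M = d%:M.
Proof. by rewrite scalar_mx22 adj22E oppr0. Qed.

End Matrix22.

Lemma det22_zero_divisor (R : idomainType) (M Y : 'M[R]_2) :
  Y != 0 -> M *m Y = 0 \/ Y *m M = 0 -> det22 M = 0.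
Proof.
move=> /negPf Y_neq0 MY0; have : det22 M *: Y = 0.
  case: MY0 => [MY0|YM0].
  - by rewrite -mul_scalar_mx -mul_adj22_mx -mulmxA MY0 mulmx0.
  - by rewrite -mul_mx_scalar -mul_mx_adj22 mulmxA YM0 mul0mx.
by move/eqP; rewrite scalemx_eq0 Y_neq0 orbF => /eqP.
Qed.

Section PolyMatrixAlgebra.
Variable F : fieldType.

(* 'M[{poly F}]_2 is canonically an algebra over {poly F} only; this alias makes it
   an F-algebra, F acting through constant polynomials. *)
Definition polyMx := 'M[{poly F}]_2.
HB.instance Definition _ := GRing.NzRing.on polyMx.

Definition scale_polyMx (k : F) (M : polyMx) : polyMx := k%:P *: (M : 'M_2).

Fact scale_polyMxA k l M : scale_polyMx k (scale_polyMx l M) = scale_polyMx (k * l) M.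
Proof. by rewrite /scale_polyMx scalerA polyCM. Qed.
Fact scale_polyMx1 : left_id 1 scale_polyMx.
Proof. by move=> M; rewrite /scale_polyMx scale1r. Qed.
Fact scale_polyMxDr : right_distributive scale_polyMx +%R.
Proof. by move=> k M N; rewrite /scale_polyMx scalerDr. Qed.
Fact scale_polyMxDl M : {morph scale_polyMx^~ M : k l / k + l}.
Proof. by move=> k l; rewrite /scale_polyMx polyCD scalerDl. Qed.
HB.instance Definition _ := GRing.Zmodule_isLmodule.Build F polyMx
  scale_polyMxA scale_polyMx1 scale_polyMxDr scale_polyMxDl.

Fact scale_polyMxAl k (M N : polyMx) : k *: (M * N) = (k *: M) * N.
Proof. exact: scalemxAl. Qed.
HB.instance Definition _ := GRing.Lmodule_isLalgebra.Build F polyMx scale_polyMxAl.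
Fact scale_polyMxAr k (M N : polyMx) : k *: (M * N) = M * (k *: N).
Proof. exact: scalemxAr. Qed.
HB.instance Definition _ := GRing.Lalgebra_isAlgebra.Build F polyMx scale_polyMxAr.

Lemma scale_polyMxE k (M : polyMx) : k *: M = k%:P *: (M : 'M_2).
Proof. by []. Qed.

Lemma mul_polyMx22 (x y z w x' y' z' w' : {poly F}) :
  (mx22 x y z w : polyMx) * mx22 x' y' z' w' =
  mx22 (x * x' + y * z') (x * y' + y * w') (z * x' + w * z') (z * y' + w * w').
Proof. exact: mulmx22. Qed.

Lemma alg_polyMxE k : k%:A = (k%:P)%:M :> polyMx.
Proof. by rewrite scale_polyMxE scalemx1. Qed.

Lemma horner_alg_scalar_polyMx (d P : {poly F}) :
  horner_alg (d%:M : polyMx) P = (P \Po d)%:M.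
Proof.
elim/poly_ind: P => [|P k IH]; first by rewrite rmorph0 comp_poly0 raddf0.
rewrite rmorphD rmorphM /= horner_algX horner_algC IH alg_polyMxE.
by rewrite comp_polyD comp_polyM comp_polyX comp_polyC raddfD /= scalar_mxM.
Qed.

End PolyMatrixAlgebra.

Lemma lrmorph_horner_alg (F : fieldType) (A B : algType F) (f : {lrmorphism A -> B})
    (x : A) (P : {poly F}) :
  f (horner_alg x P) = horner_alg (f x) P.
Proof.
elim/poly_ind: P => [|P k IH]; first by rewrite !rmorph0.
by rewrite !rmorphD !rmorphM /= !horner_algX !horner_algC IH rmorph_alg.
Qed.

Section GeneratedSubalgebra.
Variables (F : fieldType) (W : algType F) (P : W -> Prop).
Hypotheses (P1 : P 1) (PD : forall x y, P x -> P y -> P (x + y))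
  (PZ : forall k x, P x -> P (k *: x)) (PM : forall x y, P x -> P y -> P (x * y)).

Let Pbool : pred W := fun w => `[< P w >].

Let Pbool_closed : GRing.subsemialg_closed Pbool.
Proof.
split; first exact/asboolP.
- split; first by apply/asboolP; rewrite -(scale0r 1); apply: PZ.
  by move=> x y /asboolP Px /asboolP Py; apply/asboolP; apply: PD.
- by move=> k x /asboolP Px; apply/asboolP; apply: PZ.
- by move=> x y /asboolP Px /asboolP Py; apply/asboolP; apply: PM.
Qed.

Let S := {w : W | Pbool w}.
HB.instance Definition _ := [isSub of S for (@sval W Pbool)].
HB.instance Definition _ := [Choice of S by <:].
HB.instance Definition _ := GRing.SubChoice_isSubAlgebra.Build F W Pbool S Pbool_closed.
Let valS : S -> W := val.
HB.instance Definition _ := GRing.RMorphism.on valS.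
HB.instance Definition _ := GRing.Linear.on valS.

Variables (p q : {poly F}) (a b : W).
Hypotheses (hW : is_W_pq p q a b) (Pa : P a) (Pb : P b).

Lemma W_pq_ind w : P w.
Proof.
have [pa0 [qb0 univ]] := hW.
pose a' : S := exist _ a (asboolT Pa); pose b' : S := exist _ b (asboolT Pb).
have val_eq0 (s : S) : val s = 0 -> s = 0 by move=> s0; apply: val_inj.
have [[g [ga gb]] _] := univ S a' b'
  (val_eq0 _ (etrans (lrmorph_horner_alg valS a' p) pa0))
  (val_eq0 _ (etrans (lrmorph_horner_alg valS b' q) qb0)).
have [_ /(_ (valS \o g) idfun) g_id] := univ W a b pa0 qb0.
have <- : valS (g w) = w by apply: g_id => /=; rewrite ?ga ?gb.
exact/asboolP/(valP (g w)).
Qed.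
End GeneratedSubalgebra.

Lemma W_pq_left_ind (F : fieldType) (p q : {poly F}) (W : algType F) (a b : W)
    (P : W -> Prop) :
  is_W_pq p q a b -> P 1 -> (forall x y, P x -> P y -> P (x + y)) ->
  (forall k x, P x -> P (k *: x)) ->
  (forall x, P x -> P (a * x)) -> (forall x, P x -> P (b * x)) ->
  forall w, P w.
Proof.
move=> hW P1 PD PZ Pa Pb w; rewrite -[w]mulr1.
pose Q x := forall y, P y -> P (x * y).
suff : Q w by apply.
apply: (W_pq_ind (P := Q) _ _ _ _ hW) => [y Py|x x' Qx Qx' y Py|k x Qx y Py|x x' Qx Qx' y Py|//|//].
- by rewrite mul1r.
- by rewrite mulrDl; apply: PD; [apply: Qx|apply: Qx'].
- by rewrite -scalerAl; apply/PZ/Qx.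
- by rewrite -mulrA; apply/Qx/Qx'.
Qed.

Section QuadraticPolynomial.
Variables (F : fieldType) (p : {poly F}).
Hypotheses (p_monic : p \is monic) (size_p : size p = 3).

Lemma monic_size3E : p = 'X^2 + p`_1 *: 'X + (p`_0)%:P.
Proof.
apply/polyP => i; rewrite !coefD coefXn coefZ coefX coefC.
case: i => [|[|[|i]]] /=; rewrite ?mulr1 ?mulr0 ?add0r ?addr0 //.
  by move/monicP: p_monic; rewrite /lead_coef size_p.
by rewrite nth_default // size_p.
Qed.

Lemma horner_alg_monic_size3 (A : algType F) (x : A) :
  horner_alg x p = x * x - trp p *: x + (p`_0)%:A.
Proof.
rewrite {1}monic_size3E !rmorphD rmorphXn /= horner_algX horner_algC linearZ /=.
by rewrite horner_algX mulr_algl /trp scaleNr opprK expr2.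
Qed.

Lemma root_monic_size3P (A : algType F) (x : A) :
  horner_alg x p = 0 <-> x * x = trp p *: x - (p`_0)%:A.
Proof.
rewrite horner_alg_monic_size3; split => [/eqP|->]; last by rewrite addrAC subrK subrr.
by rewrite addr_eq0 subr_eq addrC => /eqP->.
Qed.

End QuadraticPolynomial.

Lemma comm_scale_self (F : fieldType) (W : algType F) (x : W) (k : F) :
  GRing.comm x (k *: x).
Proof. by rewrite /GRing.comm -scalerAl -scalerAr. Qed.

Lemma comm_horner_alg (F : fieldType) (W : algType F) (x y : W) (P : {poly F}) :
  GRing.comm x y -> GRing.comm x (horner_alg y P).
Proof. by move=> xy; apply: commr_horner => // i; rewrite coef_map; exact: comm_alg. Qed.

Lemma comm_anticomm_quadratic (F : fieldType) (W : algType F) (x y : W) (t n : F) :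
  x * x = t *: x - n%:A -> GRing.comm x (x * y + y * x - t *: y).
Proof.
(* Both products reduce to x y x - n y. *)
move=> xx; rewrite /GRing.comm mulrBr mulrBl mulrDr mulrDl.
rewrite mulrA xx -[y * x * x]mulrA xx mulrA mulrBl mulrBr -!scalerAl -!scalerAr mul1r mulr1.
by rewrite addrAC [_ - _ - _]addrAC subrr add0r addrA addrAC addrK addrC.
Qed.

Section CentralElement.
Variables (F : fieldType) (W : algType F) (a b : W) (t1 n1 t2 n2 : F).
Hypotheses (aa : a * a = t1 *: a - n1%:A) (bb : b * b = t2 *: b - n2%:A).

Definition central_elt := a * b + b * a - t2 *: a - t1 *: b.
Local Notation c := central_elt.

Lemma comm_a_central : GRing.comm a c.
Proof.
rewrite /c addrAC.
exact: commrB (comm_anticomm_quadratic _ aa) (comm_scale_self _ _).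
Qed.

Lemma comm_b_central : GRing.comm b c.
Proof.
rewrite /c [a * b + _]addrC.
exact: commrB (comm_anticomm_quadratic _ bb) (comm_scale_self _ _).
Qed.

Lemma mul_ba : b * a = c + t1 *: b + t2 *: a - a * b.
Proof. by rewrite /c !subrK addrC addKr. Qed.

End CentralElement.

Section CentralSpan.
Variables (F : fieldType) (W : algType F) (a b : W) (t1 n1 t2 n2 : F).
Hypotheses (aa : a * a = t1 *: a - n1%:A) (bb : b * b = t2 *: b - n2%:A).
Local Notation c := (central_elt a b t1 t2).

Definition c_span (w : W) := exists P Q R T : {poly F},
  w = horner_alg c P + horner_alg c Q * a + horner_alg c R * b + horner_alg c T * (a * b).

Lemma c_spanD x y : c_span x -> c_span y -> c_span (x + y).
Proof.
move=> [P [Q [R [T ->]]]] [P' [Q' [R' [T' ->]]]].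
exists (P + P'), (Q + Q'), (R + R'), (T + T').
by rewrite !rmorphD !mulrDl addrACA [X in X + _]addrACA [X in X + _ + _]addrACA.
Qed.

Lemma c_span_mulc P x : c_span x -> c_span (horner_alg c P * x).
Proof.
move=> [P0 [Q [R [T ->]]]]; exists (P * P0), (P * Q), (P * R), (P * T).
by rewrite !mulrDr !mulrA !rmorphM.
Qed.

Lemma c_spanZ k x : c_span x -> c_span (k *: x).
Proof. by rewrite -mulr_algl -(horner_algC c); apply: c_span_mulc. Qed.

Lemma c_spanB x y : c_span x -> c_span y -> c_span (x - y).
Proof. by move=> sx sy; rewrite -scaleN1r; apply/c_spanD/c_spanZ. Qed.

Lemma c_span_cmul x : c_span x -> c_span (c * x).
Proof. by rewrite -{1}(horner_algX c); apply: c_span_mulc. Qed.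

Lemma c_span1 : c_span 1.
Proof. by exists 1, 0, 0, 0; rewrite rmorph1 !rmorph0 !mul0r !addr0. Qed.

Lemma c_span_a : c_span a.
Proof. by exists 0, 1, 0, 0; rewrite rmorph1 !rmorph0 !mul0r mul1r add0r !addr0. Qed.

Lemma c_span_b : c_span b.
Proof. by exists 0, 0, 1, 0; rewrite rmorph1 !rmorph0 !mul0r mul1r !add0r addr0. Qed.

Lemma c_span_ab : c_span (a * b).
Proof. by exists 0, 0, 0, 1; rewrite rmorph1 !rmorph0 !mul0r mul1r !add0r. Qed.

Lemma c_span_c : c_span c.
Proof. by exists 'X, 0, 0, 0; rewrite horner_algX !rmorph0 !mul0r !addr0. Qed.

Local Hint Resolve c_spanD c_spanB c_spanZ c_span_mulc c_span_cmul
  c_span1 c_span_a c_span_b c_span_ab c_span_c : c_span.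

Lemma c_span_mula x : c_span x -> c_span (a * x).
Proof.
have ca (P : {poly F}) : a * horner_alg c P = horner_alg c P * a.
  by apply/comm_horner_alg; exact: comm_a_central aa.
move=> [P [Q [R [T ->]]]]; rewrite !mulrDr !mulrA !ca -!mulrA.
by rewrite [a * (a * b)]mulrA aa mulrBl -scalerAl mulr_algl; auto 15 with c_span.
Qed.

Local Hint Resolve c_span_mula : c_span.

Lemma c_span_mulb x : c_span x -> c_span (b * x).
Proof.
have cb (P : {poly F}) : b * horner_alg c P = horner_alg c P * b.
  by apply/comm_horner_alg; exact: comm_b_central bb.
move=> [P [Q [R [T ->]]]]; rewrite !mulrDr !mulrA !cb -!mulrA [b * (a * b)]mulrA.
rewrite (mul_ba a b t1 t2) mulrBl 2!mulrDl -!scalerAl -[a * b * b]mulrA bb.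
by auto 15 with c_span.
Qed.

End CentralSpan.

Lemma cramer2_eq0 (R : idomainType) (u11 u12 u21 u22 x y : R) :
  u11 * u22 - u12 * u21 != 0 ->
  u11 * x + u12 * y = 0 -> u21 * x + u22 * y = 0 -> x = 0 /\ y = 0.
Proof.
move=> /negPf det_neq0 e1 e2.
have hx : (u11 * u22 - u12 * u21) * x = u22 * (u11 * x + u12 * y) - u12 * (u21 * x + u22 * y).
  by ring.
have hy : (u11 * u22 - u12 * u21) * y = u11 * (u21 * x + u22 * y) - u21 * (u11 * x + u12 * y).
  by ring.
rewrite e1 e2 !mulr0 subr0 in hx hy.
by move/eqP: hx; move/eqP: hy; rewrite !mulf_eq0 det_neq0 => /eqP-> /eqP->.
Qed.

Section QuadraticSize.
Variable F : fieldType.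
Implicit Types (k l : F) (r : {poly F}).

Lemma size_linear_le k l : (size (k%:P * 'X + l%:P)%R <= 2)%N.
Proof.
rewrite (leq_trans (size_polyD _ _)) // geq_max (leq_trans (size_polyC_leq1 _)) // andbT.
by rewrite mul_polyC (leq_trans (size_scale_leq _ _)) // size_polyX.
Qed.

Lemma size_X2_addl r : (size r <= 2)%N -> size ('X^2 + r) = 3.
Proof. by move=> sr; rewrite size_polyDl size_polyXn. Qed.

Lemma monic_X2_addl r : (size r <= 2)%N -> 'X^2 + r \is monic.
Proof.
by move=> sr; rewrite monicE lead_coefDl ?lead_coefXn ?size_polyXn.
Qed.

End QuadraticSize.

Lemma quartic_neq0 (F : fieldType) (r1 r2 s : {poly F}) :
  (size r1 <= 2)%N -> (size r2 <= 2)%N -> (size s <= 4)%N ->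
  ('X^2 + r1) * ('X^2 + r2) + s != 0.
Proof.
move=> sr1 sr2 ss; have m_neq0 := monic_neq0 (monic_X2_addl sr1).
have sm : size (('X^2 + r1) * ('X^2 + r2)) = 5.
  by rewrite size_Mmonic ?monic_X2_addl ?size_X2_addl.
by rewrite -size_poly_eq0 size_polyDl sm // ltnS.
Qed.

Section Representation.
Variables (F : fieldType) (t1 n1 t2 n2 : F).

(* The companion matrix of X^2 - t1 X + n1, and a matrix of trace t2 and
   determinant n2 whose entries involve X, so that c is sent to gamma%:M. *)
Definition matA : polyMx F := mx22 0 (- n1%:P) 1 t1%:P.
Definition matB : polyMx F :=
  mx22 'X ('X * (t2%:P - 'X) - n2%:P) 1 (t2%:P - 'X).
Definition gamma : {poly F} := 'X * (t2 - t1)%:P - 'X ^+ 2 - (n1 + n2)%:P.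

Lemma matA_quadratic : matA * matA = t1 *: matA - n1%:A.
Proof.
rewrite mul_polyMx22 alg_polyMxE scale_polyMxE scalar_mx22 scalemx22 oppmx22 addmx22.
by congr mx22; ring.
Qed.

Lemma matB_quadratic : matB * matB = t2 *: matB - n2%:A.
Proof.
rewrite mul_polyMx22 alg_polyMxE scale_polyMxE scalar_mx22 scalemx22 oppmx22 addmx22.
by congr mx22; ring.
Qed.

Lemma central_elt_mat : central_elt matA matB t1 t2 = gamma%:M.
Proof.
rewrite /central_elt !mul_polyMx22 !scale_polyMxE scalar_mx22 !scalemx22 !oppmx22 !addmx22.
by rewrite /gamma; congr mx22; rewrite ?polyCB; ring.
Qed.

Lemma adj22_matA : adj22 matA = t1%:A - matA.
Proof.
by rewrite adj22E alg_polyMxE scalar_mx22 oppmx22 addmx22; congr mx22; ring.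
Qed.

Lemma adj22_matB : adj22 matB = t2%:A - matB.
Proof.
by rewrite adj22E alg_polyMxE scalar_mx22 oppmx22 addmx22; congr mx22; ring.
Qed.

Lemma size_gamma : size gamma = 3.
Proof.
have -> : gamma = - ('X^2 + ((t1 - t2)%:P * 'X + (n1 + n2)%:P)).
  by rewrite /gamma !polyCB; ring.
by rewrite size_polyN size_X2_addl ?size_linear_le.
Qed.

Let nw := n1%:P + 'X * (t2%:P - 'X) - n2%:P.
Let ee := (1 + 1)%:P * 'X + (t1 - t2)%:P.

Let span_det_neq0 : nw * (nw - t1%:P * ee) - n1%:P * ee * - ee != 0.
Proof.
have -> : nw * (nw - t1%:P * ee) - n1%:P * ee * - ee =
    ('X^2 + ((- t2)%:P * 'X + (n2 - n1)%:P)) *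
    ('X^2 + ((t1 + t1 - t2)%:P * 'X + (n2 - n1 + t1 * t1 - t1 * t2)%:P)) +
    n1%:P * ee * ee.
  by rewrite /nw /ee; ring.
apply: quartic_neq0; rewrite ?size_linear_le //.
have see : (size ee <= 2)%N := size_linear_le _ _.
have sne : (size (n1%:P * ee)%R <= 2)%N by rewrite mul_polyC (leq_trans (size_scale_leq _ _)).
have := size_polyMleq (n1%:P * ee) ee; lia.
Qed.

Lemma mat_span_free (z0 z1 z2 z3 : {poly F}) :
  z0%:M + z1%:M * matA + z2%:M * matB + z3%:M * (matA * matB) = 0 :> polyMx F ->
  [/\ z0 = 0, z1 = 0, z2 = 0 & z3 = 0].
Proof.
(* Entries (1,0) and (0,0) determine z1 and z0; two combinations of the entries
   leave a system in z2, z3 with determinant span_det_neq0. *)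
rewrite !scalar_mx22 !mul_polyMx22 !addmx22 mx22_0.
move=> /mx22_inj[e00 e01 e10 e11].
rewrite !(mul0r, mulr0, add0r, addr0, mul1r, mulr1) in e00 e01 e10 e11.
have := congr2 (fun u v => u + n1%:P * v) e01 e10; rewrite /= mulr0 addr0 => e1.
have := f_equal3 (fun u v w => u - v - t1%:P * w) e11 e00 e10.
rewrite /= mulr0 !subr0 => e2.
have eq1 : nw * z2 + n1%:P * ee * z3 = 0 by rewrite -e1 /nw /ee; ring.
have eq2 : - ee * z2 + (nw - t1%:P * ee) * z3 = 0 by rewrite -e2 /nw /ee; ring.
have [z2_0 z3_0] := cramer2_eq0 span_det_neq0 eq1 eq2.
rewrite z2_0 z3_0 in e00 e10.
have z1_0 : z1 = 0 by rewrite -e10; ring.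
by split=> //; rewrite -e00; ring.
Qed.

End Representation.

Lemma lrmorph_central_elt (F : fieldType) (A B : algType F) (f : {lrmorphism A -> B})
    (a b : A) (t1 t2 : F) :
  f (central_elt a b t1 t2) = central_elt (f a) (f b) t1 t2.
Proof.
by rewrite /central_elt !rmorphB rmorphD !rmorphM; congr (_ - _ - _); exact: linearZ_LR.
Qed.

Section FaithfulRepresentation.
Variables (F : fieldType) (p q : {poly F}).
Hypotheses (p_monic : p \is monic) (size_p : size p = 3)
  (q_monic : q \is monic) (size_q : size q = 3).
Variables (W : algType F) (a b : W).
Hypothesis hW : is_W_pq p q a b.
Local Notation t1 := (trp p).
Local Notation n1 := p`_0.
Local Notation t2 := (trp q).
Local Notation n2 := q`_0.
Local Notation c := (central_elt a b t1 t2).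

Let aa : a * a = t1 *: a - n1%:A.
Proof. by apply/root_monic_size3P => //; case: hW. Qed.
Let bb : b * b = t2 *: b - n2%:A.
Proof. by apply/root_monic_size3P => //; case: hW => _ []. Qed.

Lemma c_span_all w : c_span a b t1 t2 w.
Proof.
apply: (W_pq_left_ind hW) => [|||x|x]; first exact: c_span1.
- exact: c_spanD.
- exact: c_spanZ.
- exact: (c_span_mula (b := b) (t2 := t2) aa).
- exact: (c_span_mulb (n1 := n1) aa bb).
Qed.

Lemma exists_mat_rep :
  exists f : {lrmorphism W -> polyMx F}, f a = matA t1 n1 /\ f b = matB t2 n2.
Proof.
have [_ [_ univ]] := hW.
by apply: (univ _ _ _ _ _).1; apply/root_monic_size3P => //;
  [exact: matA_quadratic | exact: matB_quadratic].
Qed.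

Variables (f : {lrmorphism W -> polyMx F}) (fa : f a = matA t1 n1) (fb : f b = matB t2 n2).

Lemma mat_rep_horner_central P : f (horner_alg c P) = (P \Po gamma t1 n1 t2 n2)%:M.
Proof.
by rewrite lrmorph_horner_alg lrmorph_central_elt fa fb central_elt_mat horner_alg_scalar_polyMx.
Qed.

Lemma mat_rep_inj w : f w = 0 -> w = 0.
Proof.
have comp_gamma_eq0 (P : {poly F}) : P \Po gamma t1 n1 t2 n2 = 0 -> P = 0.
  by move/eqP; rewrite comp_poly_eq0 ?size_gamma // => /eqP.
have [P [Q [R [T ->]]]] := c_span_all w.
rewrite !rmorphD !rmorphM /= !mat_rep_horner_central fa fb.
move=> /mat_span_free[/comp_gamma_eq0-> /comp_gamma_eq0-> /comp_gamma_eq0-> /comp_gamma_eq0->].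
by rewrite rmorph0 !mul0r !addr0.
Qed.

Lemma mat_rep_star (star : {linear W -> W}) :
  is_adjunction p q a b star -> forall w, f (star w) = adj22 (f w).
Proof.
move=> [star1 [starM [_ [stara starb]]]].
apply: (W_pq_ind _ _ _ _ hW) => [|x y fx fy|k x fx|x y fx fy||].
- by rewrite star1 rmorph1 adj22_scalar.
- by rewrite !raddfD /= fx fy adj22D.
- by rewrite !linearZ /= fx !scale_polyMxE adj22Z.
- by rewrite starM !rmorphM /= fx fy adj22M.
- by rewrite stara rmorphB /= rmorph_alg fa adj22_matA.
- by rewrite starb rmorphB /= rmorph_alg fb adj22_matB.
Qed.

End FaithfulRepresentation.

Theorem mainTheorem16 (F : fieldType) (p q : {poly F})
  (hp : p \is monic) (hp2 : size p = 3%N) (hq : q \is monic) (hq2 : size q = 3%N)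
  (W : algType F) (a b : W) (hW : is_W_pq p q a b)
  (star : {linear W -> W}) (hstar : is_adjunction p q a b star)
  (x : W) (hx : x != 0) :
  (exists y : W, y != 0 /\ (x * y = 0 \/ y * x = 0)) <-> x * star x = 0.
Proof.
have [f [fa fb]] := exists_mat_rep hp hp2 hq hq2 hW.
have f_inj := mat_rep_inj hp hp2 hq hq2 hW fa fb.
have f_star := mat_rep_star hW fa fb hstar.
split=> [[y [y_neq0 xy0]]|xx0].
- have fy_neq0 : f y != 0 by apply: contra y_neq0 => /eqP/f_inj->.
  have fxy0 : f x * f y = 0 \/ f y * f x = 0.
    by case: xy0 => xy0; [left|right]; rewrite -rmorphM xy0 raddf0.
  have det0 := det22_zero_divisor fy_neq0 fxy0.
  apply: f_inj; rewrite rmorphM /= f_star.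
  by apply: etrans (mul_mx_adj22 _) _; rewrite det0 scalar_mx22 -mx22_0.
- exists (star x); split; last by left.
  have [_ [_ [[star_inv starK _] _]]] := hstar.
  by apply: contra hx => /eqP star_x0; rewrite -(starK x) star_x0 -{1}(raddf0 star) starK.
Qed.
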